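(* Assume there is an algorithm $\textsc{Alg}$ that, given a graph $G=(V,E)$ with $|V|=n$ in a dynamic stream, uses $\widetilde{O}(n)$ space and outputs a spanner of $G$ with stretch $\widetilde{O}(n^{\beta})$, for some constant $\beta\in(0,1)$, with failure probability $n^{-c}$ for some constant $c$. Then, for any constant $\alpha\in(0,1)$, one can construct an algorithm that uses $\widetilde{O}(n^{1+\alpha})$ space and outputs a spanner with stretch $\widetilde{O}(n^{\beta(1-\alpha)})$ with failure probability $\widetilde{O}(n^{(2+c)\alpha-c})$.
   Context: Dynamic stream model: a fixed vertex set $V$ of $n$ vertices is known; the (unweighted, undirected) graph's edges arrive as a stream of insertions and deletions; algorithms process the stream with limited memory (space, in bits). A subgraph $K$ of $G$ is a spanner with stretch $t$ if $d_K(u,v)\le t\cdot d_G(u,v)$ for all $u,v\in V$ ($d$ = shortest-path distance). $\widetilde{O}(f)$ means $f\cdot\mathrm{polylog}(n)$. *)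

From mathcomp Require Import all_boot.
From mathcomp Require Import boolp.
From Stdlib Require Import Reals.
Set Implicit Arguments. Unset Strict Implicit. Unset Printing Implicit Defensive.

(* An undirected edge {u,v} is stored canonically as the pair (u,v) with u < v. *)
Definition edgeset (n : nat) := {set 'I_n * 'I_n}.

Definition adj (n : nat) (E : edgeset n) : rel 'I_n :=
  fun u v => ((u, v) \in E) || ((v, u) \in E).

Definition dist_le (n : nat) (E : edgeset n) (u v : 'I_n) (k : nat) : Prop :=
  exists p : seq 'I_n, [/\ path (adj E) u p, last u p = v & (size p <= k)%N].

(* K is a spanner of G with stretch t: K is a subgraph of G and
   d_K(u,v) <= t * d_G(u,v) for all u v (with d = +oo when disconnected). *)
Definition is_spanner (n : nat) (G K : edgeset n) (t : R) : Prop :=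
  K \subset G /\
  forall (u v : 'I_n) (k : nat), dist_le G u v k ->
    exists k' : nat, (INR k' <= t * INR k)%R /\ dist_le K u v k'.

Definition update (n : nat) := ('I_n * 'I_n * bool)%type.

Definition apply_update (n : nat) (E : edgeset n) (x : update n) : edgeset n :=
  if x.2 then x.1 |: E else E :\ x.1.

Definition valid_update (n : nat) (E : edgeset n) (x : update n) : bool :=
  ((x.1.1 : nat) < x.1.2)%N && (if x.2 then x.1 \notin E else x.1 \in E).

Fixpoint valid_from (n : nat) (E : edgeset n) (s : seq (update n)) : bool :=
  if s is x :: s' then valid_update E x && valid_from (apply_update E x) s' else true.

Definition valid_stream (n : nat) (s : seq (update n)) := valid_from set0 s.

Definition stream_graph (n : nat) (s : seq (update n)) : edgeset n :=
  foldl (@apply_update n) set0 s.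

(* A (non-uniform) randomized streaming algorithm for n-vertex graphs: a uniformly
   random seed of [seedlen] bits, a working state of [statelen] bits; the memory
   (space, in bits) is seedlen + statelen. *)
Record StreamAlg (n : nat) := {
  seedlen : nat;
  statelen : nat;
  a_init : seedlen.-tuple bool -> statelen.-tuple bool;
  a_step : seedlen.-tuple bool -> statelen.-tuple bool -> update n -> statelen.-tuple bool;
  a_out  : seedlen.-tuple bool -> statelen.-tuple bool -> edgeset n }.

Definition space (n : nat) (A : StreamAlg n) : nat := (seedlen A + statelen A)%N.

Definition run_output (n : nat) (A : StreamAlg n) (r : (seedlen A).-tuple bool)
  (s : seq (update n)) : edgeset n :=
  a_out r (foldl (a_step r) (a_init r) s).

Definition fail_prob (n : nat) (A : StreamAlg n) (t : R) (s : seq (update n)) : R :=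
  (INR #|[set r : (seedlen A).-tuple bool |
            `[< ~ is_spanner (stream_graph s) (run_output r s) t >]]|
   / (2 ^ seedlen A))%R.

Definition bigOtilde (f g : nat -> R) : Prop :=
  exists (C : R) (k N : nat), forall n : nat, (N <= n)%N ->
    (f n <= C * g n * (ln (INR n)) ^ k)%R.

From mathcomp Require Import all_boot boolp zify.
From Stdlib Require Import Reals Lra.
Set Implicit Arguments. Unset Strict Implicit. Unset Printing Implicit Defensive.

(* Cut the vertex set into about n^alpha blocks of m ~ n^(1-alpha) consecutive
   vertices.  The edges between blocks i and j form a graph on 2m vertices; run
   Alg, with one shared random seed, on each of these n^(2 alpha) instances and
   output the union of the returned spanners.  Every edge of G lies in exactly
   one instance, so each edge, hence each path, of G is stretched by at most the
   stretch of Alg on 2m vertices, O~(n^(beta (1 - alpha))).  The space is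
   n^(2 alpha) O~(n^(1-alpha)) = O~(n^(1+alpha)), and a union bound over the
   instances bounds the failure probability by
   n^(2 alpha) (2m)^(-c) = O(n^((2+c) alpha - c)). *)

Lemma dist_le_cat n (E : edgeset n) u w v a b :
  dist_le E u w a -> dist_le E w v b -> dist_le E u v (a + b).
Proof.
case=> [p [pP pL pS]] [q [qP qL qS]]; exists (p ++ q); split.
- by rewrite cat_path pP pL qP.
- by rewrite last_cat pL.
- by rewrite size_cat leq_add.
Qed.

Lemma adj_dist_le1 n (E : edgeset n) u v : adj E u v -> dist_le E u v 1.
Proof. by move=> uv; exists [:: v]; rewrite /= uv. Qed.

Lemma imset_setD1_in (aT rT : finType) (f : aT -> rT) (A : {set aT}) a :
  {in a |: A &, injective f} -> f @: (A :\ a) = f @: A :\ f a.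
Proof.
move=> f_inj; apply/setP => y; rewrite !inE.
apply/imsetP/andP => [[x /setD1P[xa xA] ->]|[ya /imsetP[x xA yx]]].
  split; last exact: imset_f.
  by apply: contra xa => /eqP/f_inj-> //; rewrite !inE ?xA ?eqxx ?orbT.
by exists x; rewrite // !inE xA andbT; apply: contraNneq ya => xa; rewrite yx xa.
Qed.

Lemma card_bigcup_le (I T : finType) (F : I -> {set T}) :
  #|\bigcup_i F i| <= \sum_i #|F i|.
Proof.
elim/big_rec2: _ => [|i k U _ h]; first by rewrite cards0.
by rewrite (leq_trans (leq_card_setU _ _)) // leq_add2l.
Qed.

Lemma INR_sum_le (I : finType) (f : I -> nat) (c : R) :
  (forall i, INR (f i) <= c)%R -> (INR (\sum_i f i) <= INR #|I| * c)%R.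
Proof.
move=> fc; rewrite -big_enum /= cardE.
elim: (enum I) => [|x s IH]; first by rewrite big_nil /=; lra.
by rewrite big_cons plus_INR [size _]/= S_INR; have := fc x; lra.
Qed.

Section EquicardCoding.
Variables (X Y : finType) (eqXY : #|X| = #|Y|).
Definition equicard_enc (x : X) : Y := enum_val (cast_ord eqXY (enum_rank x)).
Definition equicard_dec (y : Y) : X := enum_val (cast_ord (esym eqXY) (enum_rank y)).
Lemma equicard_encK : cancel equicard_enc equicard_dec.
Proof. by move=> x; rewrite /equicard_enc /equicard_dec enum_valK cast_ordK enum_rankK. Qed.
End EquicardCoding.

Definition fail_set n (A : StreamAlg n) (t : R) (s : seq (update n)) :=
  [set r : (seedlen A).-tuple bool | `[< ~ is_spanner (stream_graph s) (run_output r s) t >]].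

Lemma two_pow_gt0 k : (0 < 2 ^ k)%R.
Proof. by apply: pow_lt; lra. Qed.

Lemma fail_prob_le n (A : StreamAlg n) t s b :
  (fail_prob A t s <= b)%R <-> (INR #|fail_set A t s| <= b * 2 ^ seedlen A)%R.
Proof.
rewrite /fail_prob -/(fail_set A t s).
move: (INR _) (two_pow_gt0 (seedlen A)) => k p_gt0.
have e : k = (k / 2 ^ seedlen A * 2 ^ seedlen A)%R by field; lra.
split => h; first by rewrite e; apply: Rmult_le_compat_r h; lra.
by apply: (Rmult_le_reg_r (2 ^ seedlen A)); rewrite -?e.
Qed.

Lemma INR_expn a k : INR (expn a k) = (INR a ^ k)%R.
Proof. by elim: k => [|k IH]; rewrite ?expn0 // expnS mult_INR IH. Qed.

Lemma fail_prob_le1 n (A : StreamAlg n) t s : (fail_prob A t s <= 1)%R.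
Proof.
apply/fail_prob_le; rewrite Rmult_1_l.
have := max_card (fail_set A t s); rewrite card_tuple card_bool => /leP/le_INR.
by rewrite INR_expn.
Qed.

Lemma is_spanner_le n (G K : edgeset n) t1 t2 : (t1 <= t2)%R ->
  is_spanner G K t1 -> is_spanner G K t2.
Proof.
move=> t12 [KG stretch]; split => // u v k /stretch[k' [k'_le d']].
exists k'; split => //; apply: Rle_trans k'_le _.
by apply: Rmult_le_compat_r; [exact: pos_INR | exact t12].
Qed.

Lemma fail_prob_antimono n (A : StreamAlg n) t1 t2 s : (t1 <= t2)%R ->
  (fail_prob A t2 s <= fail_prob A t1 s)%R.
Proof.
move=> t12; rewrite /fail_prob /Rdiv; apply: Rmult_le_compat_r.
  exact/Rlt_le/Rinv_0_lt_compat/two_pow_gt0.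
apply/le_INR/leP/subset_leq_card/subsetP => r.
by rewrite !inE => /asboolP t2_fail; apply/asboolP => /(is_spanner_le t12).
Qed.

Definition nblocks (n m' : nat) := (n %/ m'.+1).+1.
Definition inst_size (m' : nat) := (m'.+1 + m'.+1)%N.

Section Blocks.
Variables (n m' : nat).
Local Notation m := m'.+1.
Local Notation B := (nblocks n m').
Local Notation M := (inst_size m').

Definition block (u : 'I_n) : 'I_B := inord (u %/ m).

Lemma blockE u : block u = u %/ m :> nat.
Proof. by rewrite inordK // ltnS leq_div2r // ltnW. Qed.

Lemma low_lt (u : 'I_n) : u %% m < M.
Proof. by rewrite ltn_addr // ltn_pmod. Qed.

Lemma high_lt (u : 'I_n) : m + u %% m < M.
Proof. by rewrite ltn_add2l ltn_pmod. Qed.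

(* Instance (i, j) places block i on its first m vertices and block j on its
   last m vertices; when i = j only the first half is used. *)
Definition local (i : 'I_B) (u : 'I_n) : 'I_M :=
  if block u == i then Ordinal (low_lt u) else Ordinal (high_lt u).

Definition instance_of (e : 'I_n * 'I_n) : 'I_B * 'I_B := (block e.1, block e.2).

Definition local_edge (ij : 'I_B * 'I_B) (e : 'I_n * 'I_n) : 'I_M * 'I_M :=
  (local ij.1 e.1, local ij.1 e.2).

Definition restrict_update ij (x : update n) : option (update M) :=
  if instance_of x.1 == ij then Some (local_edge ij x.1, x.2) else None.

Definition instance ij (s : seq (update n)) : seq (update M) :=
  pmap (restrict_update ij) s.

Definition restrict ij (E : edgeset n) : edgeset M :=
  local_edge ij @: [set e in E | instance_of e == ij].

Lemma local_inj i u v : block u = block v -> local i u = local i v -> u = v.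
Proof.
move=> buv; rewrite /local buv.
have eq_mod : u %% m = v %% m -> u = v.
  move=> uv; apply: val_inj; move/(congr1 val): buv => /=; rewrite !blockE => uv_div.
  by rewrite (divn_eq u m) (divn_eq v m) uv_div uv.
by case: ifP => _ /(congr1 val) /= => [|/addnI]; exact: eq_mod.
Qed.

Lemma local_edge_inj ij : {in [pred e | instance_of e == ij] &, injective (local_edge ij)}.
Proof.
move=> [u v] [u' v'] /eqP <- /eqP [bu bv] [lu lv].
by rewrite (local_inj (esym bu) lu) (local_inj (esym bv) lv).
Qed.

Lemma local_edge_lt (e : 'I_n * 'I_n) : e.1 < e.2 ->
  (local_edge (instance_of e) e).1 < (local_edge (instance_of e) e).2.
Proof.
case: e => u v /= uv; rewrite /local eqxx; case: ifP => [/eqP buv|_] /=.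
  move/(congr1 val): buv => /=; rewrite !blockE => uv_div.
  by have := divn_eq u m; have := divn_eq v m; lia.
by rewrite ltn_addr // ltn_pmod.
Qed.

Lemma mem_restrict ij E e : instance_of e = ij ->
  (local_edge ij e \in restrict ij E) = (e \in E).
Proof.
move=> eij; apply/imsetP/idP => [[e' ] | eE]; last by exists e; rewrite // inE eE eij eqxx.
rewrite inE => /andP[e'E e'ij] /local_edge_inj-> //; by rewrite inE ?e'ij ?eij.
Qed.

Lemma restrict0 ij : restrict ij set0 = set0.
Proof. by apply/eqP; rewrite imset_eq0; apply/eqP/setP => e; rewrite !inE. Qed.

Lemma restrict_apply_update ij E x :
  restrict ij (apply_update E x) =
  if restrict_update ij x is Some y then apply_update (restrict ij E) y else restrict ij E.
Proof.
have imset_congr (A1 A2 : {set 'I_n * 'I_n}) :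
  A1 = A2 -> local_edge ij @: A1 = local_edge ij @: A2 by move->.
rewrite /restrict_update /apply_update; case: x => [e [|]] /=.
all: case: eqP => [eij | /eqP nij] /=; rewrite /restrict.
- rewrite -imsetU1; apply: imset_congr; apply/setP => e'; rewrite !inE.
  by case: eqP => // ->; rewrite eij eqxx.
- apply: imset_congr; apply/setP => e'; rewrite !inE.
  by case: eqP => // ->; rewrite (negbTE nij) !andbF.
- rewrite -imset_setD1_in; first by apply: imset_congr; apply/setP => e'; rewrite !inE andbA.
  apply: sub_in2 (@local_edge_inj ij) => e'.
  by rewrite !inE => /predU1P[->|/andP[_]] //; rewrite eij.
- apply: imset_congr; apply/setP => e'; rewrite !inE.
  by case: eqP => // ->; rewrite (negbTE nij) !andbF.
Qed.

Lemma valid_from_instance ij E s : valid_from E s ->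
  valid_from (restrict ij E) (instance ij s) /\
  foldl (@apply_update M) (restrict ij E) (instance ij s) =
  restrict ij (foldl (@apply_update n) E s).
Proof.
elim: s E => [|x s IH] E //= /andP[x_ok /IH[valid_s fold_s]].
have := restrict_apply_update ij E x; rewrite /instance /= -/(instance ij s).
rewrite /restrict_update; case: eqP => [xij|_] upd; rewrite /= -upd //.
split=> //; rewrite valid_s andbT; move: x_ok; rewrite /valid_update -xij /=.
by case/andP=> x_lt x_new; rewrite local_edge_lt //; case: x.2 x_new; rewrite mem_restrict.
Qed.

Lemma instance_stream_graph ij s : valid_stream s ->
  valid_stream (instance ij s) /\ stream_graph (instance ij s) = restrict ij (stream_graph s).
Proof. by move/(valid_from_instance ij); rewrite restrict0. Qed.

(* [d] is a junk value, returned for positions that encode no vertex. *)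
Definition unlocal (ij : 'I_B * 'I_B) (d : 'I_n) (w : 'I_M) : 'I_n :=
  insubd d (if w < m then ij.1 * m + w else ij.2 * m + (w - m)).

Lemma unlocal_local ij d u : (block u == ij.1) || (block u == ij.2) ->
  unlocal ij d (local ij.1 u) = u.
Proof.
move=> u_ij; apply: val_inj; rewrite /unlocal /local.
case: (boolP (block u == ij.1)) => [/eqP <-|u_notin]; rewrite val_insubd /=.
  by rewrite ltn_pmod // blockE -divn_eq ltn_ord.
have -> : (m + u %% m < m) = false by rewrite ltnNge leq_addr.
by move: u_ij; rewrite (negbTE u_notin) /= => /eqP <-; rewrite addKn blockE -divn_eq ltn_ord.
Qed.

Definition assemble (K : 'I_B * 'I_B -> edgeset M) : edgeset n :=
  [set e | local_edge (instance_of e) e \in K (instance_of e)].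

Section Assembly.
Variables (G : edgeset n) (K : 'I_B * 'I_B -> edgeset M) (t : R).
Hypothesis K_spanner : forall ij, is_spanner (restrict ij G) (K ij) t.

Lemma assemble_sub : assemble K \subset G.
Proof.
apply/subsetP => e; rewrite inE => eK.
by have /subsetP/(_ _ eK) := (K_spanner (instance_of e)).1; rewrite mem_restrict.
Qed.

Lemma mem_assemble_unlocal ij d w1 w2 : (w1, w2) \in K ij ->
  (unlocal ij d w1, unlocal ij d w2) \in assemble K.
Proof.
move=> wK; have /subsetP/(_ _ wK)/imsetP[[u v]] := (K_spanner ij).1.
rewrite inE => /andP[_ /eqP uv_ij] [w1E w2E]; subst ij.
by rewrite w1E w2E !unlocal_local ?eqxx ?orbT // inE /local_edge /= -w1E -w2E.
Qed.

Lemma unlocal_dist ij d w1 w2 k : dist_le (K ij) w1 w2 k ->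
  dist_le (assemble K) (unlocal ij d w1) (unlocal ij d w2) k.
Proof.
case=> p [pP pL pS]; exists (map (unlocal ij d) p); split.
- apply: homo_path pP => a b /orP[] ab; apply/orP; [left|right]; exact: mem_assemble_unlocal.
- by rewrite last_map pL.
- by rewrite size_map.
Qed.

Lemma assemble_edge u v : adj G u v ->
  exists k, (INR k <= t)%R /\ dist_le (assemble K) u v k.
Proof.
move=> uv_adj.
have [e [eG e_uv]] : exists e, e \in G /\ (e = (u, v) \/ e = (v, u)).
  by case/orP: uv_adj => ?; [exists (u, v) | exists (v, u)]; split => //; [left|right].
set ij := instance_of e.
have in_ij x : (x == e.1) || (x == e.2) -> (block x == ij.1) || (block x == ij.2).
  by case/orP => /eqP->; rewrite eqxx ?orbT.
have local_adj : adj (restrict ij G) (local ij.1 u) (local ij.1 v).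
  have := @mem_restrict ij G e erefl; rewrite eG.
  by case: e_uv => e_eq; rewrite e_eq /= /adj => ->; rewrite ?orbT.
have [k [k_le k_dist]] := (K_spanner ij).2 _ _ _ (adj_dist_le1 local_adj).
exists k; split; first by rewrite Rmult_1_r in k_le.
have := unlocal_dist u k_dist; rewrite !unlocal_local //; apply: in_ij;
  by case: e_uv => ->; rewrite eqxx ?orbT.
Qed.

Lemma assemble_path u p : path (adj G) u p ->
  exists k, (INR k <= t * INR (size p))%R /\ dist_le (assemble K) u (last u p) k.
Proof.
elim: p u => [|v p IH] u; first by exists 0%N; split; [rewrite /=; lra | exists [::]].
case/andP => /assemble_edge[k1 [k1_le d1]] /IH[k2 [k2_le d2]].
exists (k1 + k2)%N; split; last exact: dist_le_cat d1 d2.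
by rewrite plus_INR (_ : size (v :: p) = (size p).+1) // S_INR; lra.
Qed.

Hypothesis t_ge0 : (0 <= t)%R.

Lemma assemble_spanner : is_spanner G (assemble K) t.
Proof.
split; first exact: assemble_sub.
move=> u v k [p [pP <- p_size]]; have [k' [k'_le d']] := assemble_path pP.
exists k'; split => //; apply: Rle_trans k'_le _.
by apply/Rmult_le_compat_l/le_INR/leP.
Qed.

End Assembly.

Section Blockwise.
Variable A : StreamAlg M.
Local Notation T := (statelen A).

Definition blockwise_state := {ffun 'I_B * 'I_B -> T.-tuple bool}.

Lemma card_blockwise_state : #|{: blockwise_state}| = #|{: (T * (B * B)).-tuple bool}|.
Proof. by rewrite card_ffun !card_tuple card_bool card_prod card_ord -expnM. Qed.

Local Notation enc := (equicard_enc card_blockwise_state).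
Local Notation dec := (equicard_dec card_blockwise_state).

(* All instances share the seed of [A]: their failures are combined by a union
   bound, not by independence. *)
Definition blockwise : StreamAlg n := {|
  seedlen := seedlen A;
  statelen := T * (B * B);
  a_init := fun r => enc [ffun _ => a_init r];
  a_step := fun r st x => enc [ffun ij =>
    if restrict_update ij x is Some y then a_step r (dec st ij) y else dec st ij];
  a_out := fun r st => assemble (fun ij => a_out r (dec st ij)) |}.

Lemma blockwise_foldl r s (st : blockwise_state) :
  foldl (a_step (s := blockwise) r) (enc st) s =
  enc [ffun ij => foldl (a_step (s := A) r) (st ij) (instance ij s)].
Proof.
elim: s st => [|x s IH] st /=; first by rewrite ffunK.
rewrite equicard_encK IH; congr enc; apply/ffunP => ij; rewrite !ffunE /instance /=.
by case: (restrict_update ij x).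
Qed.

Lemma run_output_blockwise r s :
  @run_output n blockwise r s = assemble (fun ij => @run_output M A r (instance ij s)).
Proof.
rewrite /run_output blockwise_foldl /= equicard_encK; congr assemble; apply: funext => ij.
by rewrite !ffunE.
Qed.

Lemma space_blockwise : space blockwise <= B * B * space A.
Proof. by rewrite /space /= mulnDr leq_add ?leq_pmull ?muln_gt0 // mulnC. Qed.

Lemma fail_set_blockwise t s : valid_stream s -> (0 <= t)%R ->
  fail_set blockwise t s \subset \bigcup_ij fail_set A t (instance ij s).
Proof.
move=> s_ok t_ge0; apply/subsetP => r; rewrite inE => /asboolP; apply: contra_notP => r_ok.
rewrite run_output_blockwise; apply: assemble_spanner => // ij.
apply: contrapT => ij_fail; apply: r_ok; apply/bigcupP; exists ij => //.
by rewrite inE (instance_stream_graph ij s_ok).2; apply/asboolP.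
Qed.

Lemma fail_prob_blockwise t s b : valid_stream s -> (0 <= t)%R ->
  (forall ij, fail_prob A t (instance ij s) <= b)%R ->
  (fail_prob blockwise t s <= INR (B * B) * b)%R.
Proof.
move=> s_ok t_ge0 b_ok; apply/fail_prob_le.
have card_le := leq_trans (subset_leq_card (fail_set_blockwise s_ok t_ge0)) (card_bigcup_le _).
apply: Rle_trans (le_INR _ _ (elimTF leP card_le)) _.
apply: Rle_trans (INR_sum_le (c := (b * 2 ^ seedlen A)%R) _) _.
  by move=> ij; have ij_le := (fail_prob_le _ _ _ _).1 (b_ok ij); exact ij_le.
by rewrite card_prod card_ord Rmult_assoc; right.
Qed.

End Blockwise.
End Blocks.

Lemma ln_le x y : (0 < x)%R -> (x <= y)%R -> (ln x <= ln y)%R.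
Proof. by move=> x_gt0 [xy|<-]; [apply/Rlt_le/ln_increasing | apply: Rle_refl]. Qed.

Lemma Rpower_pos x y : (0 < Rpower x y)%R.
Proof. exact: exp_pos. Qed.

Lemma Rpower_ge1 x y : (1 <= x)%R -> (0 <= y)%R -> (1 <= Rpower x y)%R.
Proof. by move=> x_ge1 y_ge0; rewrite -(Rpower_O x); [apply: Rle_Rpower | lra]. Qed.

Lemma INR_ge1 n : (1 <= n)%N -> (1 <= INR n)%R.
Proof. by move/leP/le_INR. Qed.

Definition nat_ceil (y : R) : nat := Z.to_nat (up y).

Lemma nat_ceil_bounds y : (0 <= y)%R -> (y <= INR (nat_ceil y) <= y + 1)%R.
Proof.
move=> y_ge0; have [up_gt up_le] := archimed y.
rewrite /nat_ceil INR_IZR_INZ Znat.Z2Nat.id; first lra.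
by apply: le_IZR; rewrite /=; lra.
Qed.

Section BigOtilde.
Implicit Types (f g : nat -> R).

Lemma bigOtilde_INR f : bigOtilde f INR -> bigOtilde f (fun n => Rpower (INR n) 1).
Proof.
case=> C [k [N f_le]]; exists C, k, (N + 1)%N => n n_ge.
have n_ge1 : (1 <= INR n)%R by apply: INR_ge1; lia.
by rewrite Rpower_1; [apply: f_le; lia | lra].
Qed.

Lemma ln_INR_ge0 n : (1 <= n)%N -> (0 <= ln (INR n))%R.
Proof. by move/INR_ge1 => n_ge1; rewrite -ln_1; apply: ln_le; lra. Qed.

Lemma bigOtilde_Rmax0 f γ : bigOtilde f (fun n => Rpower (INR n) γ) ->
  bigOtilde (fun n => Rmax (f n) 0) (fun n => Rpower (INR n) γ).
Proof.
case=> C [k [N f_le]]; exists (Rabs C), k, (N + 1)%N => n n_ge.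
have Q_ge0 : (0 <= Rpower (INR n) γ * ln (INR n) ^ k)%R.
  by apply/Rmult_le_pos/pow_le/ln_INR_ge0; [apply/Rlt_le/Rpower_pos | lia].
have f_n := f_le n (leq_trans (leq_addr _ _) n_ge); rewrite !Rmult_assoc in Q_ge0 f_n *.
have C_le := Rle_abs C; have C_ge0 := Rabs_pos C; apply: Rmax_lub; nra.
Qed.

Lemma bigOtilde_mul_Rpower f g (D δ γ ε : R) : (0 <= D)%R -> (δ + γ = ε)%R ->
  (exists N, forall n, (N <= n)%N -> (g n <= D * Rpower (INR n) δ * f n)%R) ->
  bigOtilde f (fun n => Rpower (INR n) γ) -> bigOtilde g (fun n => Rpower (INR n) ε).
Proof.
move=> D_ge0 <- [N1 g_le] [C [k [N2 f_le]]]; exists (D * C)%R, k, (N1 + N2)%N => n n_ge.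
have := f_le n (leq_trans (leq_addl _ _) n_ge).
have := g_le n (leq_trans (leq_addr _ _) n_ge).
have := Rmult_le_pos _ _ D_ge0 (Rlt_le _ _ (Rpower_pos (INR n) δ)).
rewrite Rpower_plus; move: (Rpower _ δ) (Rpower _ γ) (ln _ ^ k)%R => P Q L PD_ge0 gP fQ.
by apply: Rle_trans gP _; have := Rmult_le_compat_l _ _ _ PD_ge0 fQ; lra.
Qed.

End BigOtilde.

Section Scaling.
Variable alpha : R.
Hypothesis alpha_bounds : (0 < alpha < 1)%R.

Definition ideal_size (n : nat) : R := Rpower (INR n) (1 - alpha).
Definition block_pred (n : nat) : nat := nat_ceil (ideal_size n).

Local Notation M n := (inst_size (block_pred n)).
Local Notation B n := (nblocks n (block_pred n)).

Section LargeN.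
Variable n : nat.
Hypothesis n_ge1 : (1 <= n)%N.

Lemma ideal_size_bounds : (1 <= ideal_size n <= INR n)%R.
Proof.
have := INR_ge1 n_ge1 => n_ge1'; split; first by apply: Rpower_ge1; lra.
by rewrite -[X in (_ <= X)%R](Rpower_1 (INR n)); [apply: Rle_Rpower; lra | lra].
Qed.

Lemma inst_size_bounds : (ideal_size n <= INR (M n) <= 6 * ideal_size n)%R.
Proof.
have [x_ge1 _] := ideal_size_bounds.
have := nat_ceil_bounds (Rlt_le _ _ (Rlt_le_trans _ _ _ Rlt_0_1 x_ge1)).
by rewrite /inst_size plus_INR S_INR -/(block_pred n); lra.
Qed.

Lemma nblocks_sq_le : (INR (B n * B n) <= 4 * Rpower (INR n) (2 * alpha))%R.
Proof.
have [x_ge1 _] := ideal_size_bounds.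
have [m_ge _] := nat_ceil_bounds (Rlt_le _ _ (Rlt_le_trans _ _ _ Rlt_0_1 x_ge1)).
have n_alpha : (Rpower (INR n) alpha * ideal_size n = INR n)%R.
  rewrite /ideal_size -Rpower_plus Rplus_minus Rpower_1 //; have := INR_ge1 n_ge1; lra.
have div_le : (INR (n %/ (block_pred n).+1) <= Rpower (INR n) alpha)%R.
  apply: (Rmult_le_reg_r (ideal_size n)); first lra.
  rewrite n_alpha.
  apply: (@Rle_trans _ (INR (n %/ (block_pred n).+1) * INR (block_pred n).+1)).
    by apply: Rmult_le_compat_l; [exact: pos_INR | rewrite S_INR /block_pred; lra].
  by rewrite -mult_INR; apply/le_INR/leP/leq_divM.
have alpha_ge1 : (1 <= Rpower (INR n) alpha)%R by apply: Rpower_ge1; [exact: INR_ge1 | lra].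
have B_le : (INR (B n) <= 2 * Rpower (INR n) alpha)%R by rewrite /nblocks S_INR; lra.
rewrite mult_INR (_ : 2 * alpha = alpha + alpha)%R ?Rpower_plus; last ring.
by have := Rmult_le_compat _ _ _ _ (pos_INR _) (pos_INR _) B_le B_le; lra.
Qed.

Lemma space_blockwise_le (A : StreamAlg (M n)) :
  (INR (space (@blockwise n (block_pred n) A)) <=
   4 * Rpower (INR n) (2 * alpha) * INR (space A))%R.
Proof.
apply: Rle_trans (le_INR _ _ (elimTF leP (space_blockwise n A))) _; rewrite mult_INR.
by apply: Rmult_le_compat_r; [exact: pos_INR | exact: nblocks_sq_le].
Qed.

End LargeN.

Lemma ln_inst_size_le n : (6 <= n)%N -> (0 <= ln (INR (M n)) <= 2 * ln (INR n))%R.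
Proof.
move=> n_ge6; have n_ge1 : (1 <= n)%N by lia.
have [x_ge1 x_le] := ideal_size_bounds n_ge1; have [M_ge M_le] := inst_size_bounds n_ge1.
have := le_INR _ _ (elimTF leP n_ge6); rewrite [INR 6]/= => n_ge6'.
split; first by rewrite -ln_1; apply: ln_le; lra.
rewrite (_ : 2 * ln (INR n) = ln (INR n * INR n))%R; last by rewrite ln_mult; lra.
by apply: ln_le; nra.
Qed.

Lemma inst_size_unbounded K : exists N, forall n, (N <= n)%N -> (K <= M n)%N.
Proof.
pose N := nat_ceil (Rpower (INR K + 1) (/ (1 - alpha))).
exists (N + 1)%N => n n_ge; have n_ge1 : (1 <= n)%N by lia.
have [N_ge _] := nat_ceil_bounds (Rlt_le _ _ (Rpower_pos (INR K + 1) (/ (1 - alpha)))).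
have N_le : (INR N <= INR n)%R by apply/le_INR/leP; lia.
have K_le : (INR K + 1 <= ideal_size n)%R.
  rewrite -[X in (X <= _)%R](Rpower_1 (INR K + 1)); last by have := pos_INR K; lra.
  rewrite -[X in Rpower _ X](Rinv_l (1 - alpha)); last lra.
  rewrite -Rpower_mult /ideal_size; apply: Rle_Rpower_l; first lra.
  by split; [exact: Rpower_pos | rewrite /N in N_le; lra].
have [M_ge _] := inst_size_bounds n_ge1.
by apply/leP/INR_le; lra.
Qed.

Lemma bigOtilde_comp_inst_size f (γ : R) : (0 <= γ)%R ->
  bigOtilde f (fun n => Rpower (INR n) γ) ->
  bigOtilde (fun n => f (M n)) (fun n => Rpower (INR n) (γ * (1 - alpha))).
Proof.
move=> γ_ge0 [C [k [N f_le]]]; have [N0 M_large] := inst_size_unbounded N.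
exists (Rabs C * Rpower 6 γ * 2 ^ k)%R, k, (N0 + 6)%N => n n_ge.
have n_ge1 : (1 <= n)%N by lia.
have [x_ge1 _] := ideal_size_bounds n_ge1; have [M_ge M_le] := inst_size_bounds n_ge1.
have [lnM_ge0 lnM_le] : (0 <= ln (INR (M n)) <= 2 * ln (INR n))%R.
  by apply: ln_inst_size_le; lia.
have Mpow_le : (Rpower (INR (M n)) γ <= Rpower 6 γ * Rpower (INR n) (γ * (1 - alpha)))%R.
  rewrite [X in Rpower (INR n) X]Rmult_comm -Rpower_mult -/(ideal_size n).
  by rewrite Rpower_mult_distr; try lra; apply: Rle_Rpower_l; lra.
have lnMpow_le : (ln (INR (M n)) ^ k <= 2 ^ k * ln (INR n) ^ k)%R.
  by rewrite -Rpow_mult_distr; apply: pow_incr; lra.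
have MlnM_ge0 : (0 <= Rpower (INR (M n)) γ * ln (INR (M n)) ^ k)%R.
  by apply/Rmult_le_pos/pow_le => //; apply/Rlt_le/Rpower_pos.
apply: Rle_trans (f_le _ (M_large n _)) _; first lia.
rewrite Rmult_assoc; apply: Rle_trans (Rmult_le_compat_r _ _ _ MlnM_ge0 (Rle_abs C)) _.
rewrite (_ : _ * _ * _ * _ = Rabs C * ((Rpower 6 γ * Rpower (INR n) (γ * (1 - alpha))) *
  (2 ^ k * ln (INR n) ^ k)))%R; last ring.
apply: Rmult_le_compat_l; first exact: Rabs_pos.
apply: Rmult_le_compat => //; [exact/Rlt_le/Rpower_pos | exact: pow_le].
Qed.

(* Alg is only assumed to succeed on instances with at least N vertices;
   otherwise the trivial bound 1 is used. *)
Definition fail_bound (c : R) (N n : nat) : R :=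
  if (N <= M n)%N then (INR (B n * B n) * Rpower (INR (M n)) (- c))%R else 1%R.

Lemma bigOtilde_fail_bound (c : R) (N : nat) : (0 <= c)%R ->
  bigOtilde (fail_bound c N) (fun n => Rpower (INR n) ((2 + c) * alpha - c)).
Proof.
move=> c_ge0; have [N0 M_large] := inst_size_unbounded N.
exists 4%R, 0%N, (N0 + 1)%N => n n_ge; have n_ge1 : (1 <= n)%N by lia.
rewrite /fail_bound M_large; last lia; rewrite pow_O Rmult_1_r.
have [x_ge1 _] := ideal_size_bounds n_ge1; have [M_ge _] := inst_size_bounds n_ge1.
have Mc_le : (Rpower (INR (M n)) (- c) <= Rpower (ideal_size n) (- c))%R.
  rewrite !Rpower_Ropp; apply: Rinv_le_contravar; first exact: Rpower_pos.
  by apply: Rle_Rpower_l; lra.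
rewrite (_ : (2 + c) * alpha - c = 2 * alpha + (1 - alpha) * - c)%R; last ring.
rewrite Rpower_plus -[Rpower _ (_ * - c)]Rpower_mult -/(ideal_size n) -Rmult_assoc.
apply: Rmult_le_compat => //; [exact: pos_INR | exact/Rlt_le/Rpower_pos |].
exact: nblocks_sq_le.
Qed.

End Scaling.

Theorem theorem4p7 (beta c : R) :
  (0 < beta < 1)%R -> (0 < c)%R ->
  (exists (Alg : forall n : nat, StreamAlg n) (t : nat -> R),
     bigOtilde (fun n => INR (space (Alg n))) (fun n => INR n) /\
     bigOtilde t (fun n => Rpower (INR n) beta) /\
     exists N : nat, forall (n : nat) (s : seq (update n)), (N <= n)%N ->
       valid_stream s -> (fail_prob (Alg n) (t n) s <= Rpower (INR n) (- c))%R) ->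
  forall alpha : R, (0 < alpha < 1)%R ->
  exists (Alg' : forall n : nat, StreamAlg n) (t' delta : nat -> R),
    bigOtilde (fun n => INR (space (Alg' n))) (fun n => Rpower (INR n) (1 + alpha)) /\
    bigOtilde t' (fun n => Rpower (INR n) (beta * (1 - alpha))) /\
    bigOtilde delta (fun n => Rpower (INR n) ((2 + c) * alpha - c)) /\
    forall (n : nat) (s : seq (update n)),
      valid_stream s -> (fail_prob (Alg' n) (t' n) s <= delta n)%R.
Proof.
move=> beta_bounds c_gt0 [Alg [t [space_Alg [stretch_Alg [N fail_Alg]]]]] alpha alpha_bounds.
pose M n := inst_size (block_pred alpha n).
exists (fun n => blockwise n (Alg (M n))), (fun n => Rmax (t (M n)) 0), (fail_bound alpha c N).
split; [|split; [|split]].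
- pose space_M n := INR (space (Alg (M n))).
  apply: (@bigOtilde_mul_Rpower space_M _ 4 (2 * alpha) (1 * (1 - alpha))); [lra | ring | |].
    by exists 1%N => n n_ge1; exact: space_blockwise_le.
  apply: (bigOtilde_comp_inst_size alpha_bounds (f := fun m => INR (space (Alg m))));
    [lra | exact: bigOtilde_INR].
- apply: bigOtilde_Rmax0; apply: (bigOtilde_comp_inst_size alpha_bounds (f := t)) => //; lra.
- by apply: bigOtilde_fail_bound; lra.
- move=> n s s_ok; rewrite /fail_bound; case: ifP => [N_le|_]; last exact: fail_prob_le1.
  apply: fail_prob_blockwise => // [|ij]; first exact: Rmax_r.
  apply: Rle_trans (fail_prob_antimono _ _ (Rmax_l _ _)) _.
  by apply: fail_Alg => //; exact: (instance_stream_graph ij s_ok).1.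
Qed.
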